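(* Let $\mathcal{A}\subset\mathcal{P}[n]$, let $G$ be the induced subgraph of $Q_n$ on vertex set $\mathcal{A}$, and let $i\in\{1,\dots,n\}$. Suppose $G$ has average degree at least $d$ and any two vertices of $G$ are at Hamming distance less than $k$. Then the induced subgraph $G'$ of $Q_n$ on vertex set $C_i(\mathcal{A})$ also has average degree at least $d$ and any two of its vertices are at Hamming distance less than $k$.
   Context: Vertices of $Q_n$ are identified with subsets of $[n]=\{1,\dots,n\}$ (elements of the power set $\mathcal{P}[n]$); two sets are adjacent iff their symmetric difference has size one, and the Hamming distance of $A,B$ is $|A\triangle B|$. For $A\in\mathcal{P}[n]$, $C_i(A)=A\setminus\{i\}$ if $i\in A$ and $C_i(A)=A$ if $i\notin A$. For $\mathcal{A}\subset\mathcal{P}[n]$, the down-compression is $C_i(\mathcal{A})=\{C_i(A):A\in\mathcal{A}\}\cup\{A\in\mathcal{A}:C_i(A)\in\mathcal{A}\}$. Average degree is $2|E|/|V|$. *)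

From mathcomp Require Import all_boot all_order all_algebra.
Set Implicit Arguments. Unset Strict Implicit. Unset Printing Implicit Defensive.
Import Order.TTheory GRing.Theory Num.Theory.

(* Vertices of Q_n are subsets of [n], modelled as {set 'I_n}
   (element i : 'I_n stands for i+1 in {1,...,n}). *)

Definition symdiff (n : nat) (A B : {set 'I_n}) : {set 'I_n} := (A :\: B) :|: (B :\: A).
Definition hamming (n : nat) (A B : {set 'I_n}) : nat := #|symdiff A B|.

Definition adjQ (n : nat) (A B : {set 'I_n}) : bool := hamming A B == 1%N.

Definition induced_edges (n : nat) (F : {set {set 'I_n}}) : {set {set {set 'I_n}}} :=
  [set [set A; B] | A in F, B in F & adjQ A B].

(* average degree 2|E|/|V| (as a real number in R); 0 for the empty graph *)
Definition avg_degree (R : realFieldType) (n : nat) (F : {set {set 'I_n}}) : R :=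
  (2 * #|induced_edges F|)%:R / #|F|%:R.

Definition compress1 (n : nat) (i : 'I_n) (A : {set 'I_n}) : {set 'I_n} :=
  if i \in A then A :\ i else A.

Definition compress (n : nat) (i : 'I_n) (F : {set {set 'I_n}}) : {set {set 'I_n}} :=
  [set compress1 i A | A in F] :|: [set A in F | compress1 i A \in F].

From mathcomp Require Import all_boot all_order all_algebra.
Import Order.TTheory GRing.Theory Num.Theory.
Set Implicit Arguments. Unset Strict Implicit. Unset Printing Implicit Defensive.

(* C_i(F) is the image of F under X |-> (if X\i \in F then X else X\i), which
   is injective on F, so |C_i(F)| = |F|.  An edge of F that is not an edge of
   C_i(F) has i in both endpoints; deleting i from both yields an edge of C_i(F)
   that is not contained in F, which injects the edges of F into those of C_i(F).
   Distances do not grow: deleting i from both sets only shrinks the symmetric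
   difference, and in the mixed case d(X, Y\i) <= d(X\i, Y) with X\i, Y \in F. *)

Section Cube.
Variable n : nat.
Implicit Types (A B X : {set 'I_n}) (i : 'I_n) (e : {set {set 'I_n}}).

Lemma setD1_id i X : i \notin X -> X :\ i = X.
Proof. by move=> iX; apply/setDidPl; rewrite disjoint_sym disjoints1. Qed.

Lemma compress1E i X : compress1 i X = X :\ i.
Proof. by rewrite /compress1; case: ifPn => // /setD1_id. Qed.

Lemma in_symdiff A B x : (x \in symdiff A B) = ((x \in A) != (x \in B)).
Proof. by rewrite !inE; case: (x \in A); case: (x \in B). Qed.

Lemma hammingC A B : hamming A B = hamming B A.
Proof. by rewrite /hamming /symdiff setUC. Qed.

Lemma adjQC A B : adjQ A B = adjQ B A.
Proof. by rewrite /adjQ hammingC. Qed.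

Lemma symdiffD1 i A B : symdiff (A :\ i) (B :\ i) = symdiff A B :\ i.
Proof.
apply/setP=> x; rewrite in_setD1 !in_symdiff !in_setD1.
by case: (x == i).
Qed.

Lemma hammingD1 i A B : (hamming (A :\ i) (B :\ i) <= hamming A B)%N.
Proof. by rewrite /hamming symdiffD1 subset_leq_card ?subD1set. Qed.

Lemma hammingD1_eq i A B :
  i \in A -> i \in B -> hamming (A :\ i) (B :\ i) = hamming A B.
Proof.
by move=> iA iB; rewrite /hamming symdiffD1 setD1_id // in_symdiff iA iB.
Qed.

Lemma hamming_setD1_swap i A B :
  i \in B -> (hamming A (B :\ i) <= hamming (A :\ i) B)%N.
Proof.
move=> iB; apply/subset_leq_card/subsetP=> x.
rewrite !in_symdiff !in_setD1; case: (eqVneq x i) => [->|] //=.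
by rewrite iB; case: (i \in A).
Qed.

Lemma adjQ_setD1 i A B : adjQ A B -> i \in A -> i \notin B -> B = A :\ i.
Proof.
move=> /cards1P[x Ex] iA iB.
have /set1P ix : i \in [set x] by rewrite -Ex in_symdiff iA (negbTE iB).
apply/setP=> y; rewrite in_setD1; case: (eqVneq y i) => [->|yi] /=.
  exact: negbTE.
have : y \notin symdiff A B by rewrite Ex in_set1 -ix.
by rewrite in_symdiff negbK => /eqP.
Qed.

Lemma imset_setD1K i (S : {set {set 'I_n}}) :
  {in S, forall X, i \in X} -> [set i |: Y | Y in [set X :\ i | X in S]] = S.
Proof.
move=> iS; rewrite -imset_comp -[RHS]imset_id; apply: eq_in_imset => X /iS.
exact: setD1K.
Qed.

Lemma induced_edgesP (F : {set {set 'I_n}}) e :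
  reflect (exists A B, [/\ A \in F, B \in F, adjQ A B & e = [set A; B]])
          (e \in induced_edges F).
Proof.
apply: (iffP imset2P) => [[A B AF]|[A [B [AF BF AB ->]]]].
  by rewrite inE => /andP[BF AB] ->; exists A, B.
by exists A B; rewrite // inE BF.
Qed.

Lemma induced_edges_sub (F : {set {set 'I_n}}) e :
  e \in induced_edges F -> e \subset F.
Proof. by case/induced_edgesP=> A [B [AF BF _ ->]]; rewrite subUset !sub1set AF. Qed.

End Cube.

Section Compression.
Variables (n : nat) (i : 'I_n) (F : {set {set 'I_n}}).
Implicit Types (A B X Y : {set 'I_n}) (e : {set {set 'I_n}}).

Definition compress_map X : {set 'I_n} := if X :\ i \in F then X else X :\ i.

Lemma compressE : compress i F = compress_map @: F.
Proof.
apply/setP=> Z; rewrite /compress in_setU; apply/orP/imsetP.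
- case=> [/imsetP[X XF ->]|]; last first.
    by rewrite inE compress1E => /andP[ZF ZiF]; exists Z; rewrite /compress_map ?ZiF.
  rewrite compress1E; have [XiF|XiF] := boolP (X :\ i \in F).
    by exists (X :\ i); rewrite // /compress_map (setD1_id (X := X :\ i)) ?XiF // setD11.
  by exists X; rewrite /compress_map ?(negbTE XiF).
- case=> X XF ->; rewrite /compress_map; case: ifP => XiF.
    by right; rewrite inE compress1E XF XiF.
  by left; apply/imsetP; exists X; rewrite ?compress1E.
Qed.

Lemma setD1_notin_mem X : X \in F -> X :\ i \notin F -> i \in X.
Proof. by move=> XF; apply: contraR => /setD1_id ->. Qed.

Lemma compress_map_inj : {in F &, injective compress_map}.
Proof.
move=> X Y XF YF; rewrite /compress_map; case: ifP => XiF; case: ifP => YiF //.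
- by move=> EXY; move: YiF; rewrite -EXY XF.
- by move=> EXY; move: XiF; rewrite EXY YF.
- move=> EXY; have iX := setD1_notin_mem XF (negbT XiF).
  by rewrite -(setD1K iX) EXY setD1K // setD1_notin_mem ?YiF.
Qed.

Lemma card_compress : #|compress i F| = #|F|.
Proof. by rewrite compressE (card_in_imset compress_map_inj). Qed.

Lemma setD1_in_compress X : X \in F -> X :\ i \in compress i F.
Proof. by move=> XF; rewrite inE -compress1E imset_f. Qed.

Lemma notin_compress X :
  X \in F -> X \notin compress i F -> i \in X /\ X :\ i \notin F.
Proof.
move=> XF XnC; suff XiF : X :\ i \notin F by rewrite (setD1_notin_mem XF).
apply: contra XnC => XiF; rewrite compressE; apply/imsetP.
by exists X; rewrite /compress_map ?XiF.
Qed.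

Lemma adjQ_notin_compress A B : A \in F -> B \in F -> adjQ A B ->
  A \notin compress i F -> i \in A /\ i \in B.
Proof.
move=> AF BF AB AnC; have [iA AiF] := notin_compress AF AnC; split=> //.
by apply: contraR AiF => iB; rewrite -(adjQ_setD1 AB iA iB).
Qed.

Lemma edge_notin_compress e : e \in induced_edges F ->
  ~~ (e \subset compress i F) -> {in e, forall X, i \in X}.
Proof.
case/induced_edgesP=> A [B [AF BF AB ->]].
rewrite subUset !sub1set negb_and => nC.
have [iA iB] : i \in A /\ i \in B.
  case/orP: nC => [AnC|BnC]; first exact: adjQ_notin_compress AnC.
  by rewrite adjQC in AB; have [] := adjQ_notin_compress BF AF AB BnC.
by move=> X; rewrite !inE => /orP[]/eqP->.
Qed.

Definition compress_edge e : {set {set 'I_n}} :=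
  if e \subset compress i F then e else [set X :\ i | X in e].

Lemma compress_edge_in e :
  e \in induced_edges F -> compress_edge e \in induced_edges (compress i F).
Proof.
move=> eE; rewrite /compress_edge; case: ifPn => eC.
  have [A [B [AF BF AB Ee]]] := induced_edgesP _ _ eE.
  move: eC; rewrite Ee subUset !sub1set => /andP[AC BC].
  by apply/induced_edgesP; exists A, B.
have ie := edge_notin_compress eE eC.
have [A [B [AF BF AB Ee]]] := induced_edgesP _ _ eE.
have [iA iB] : i \in A /\ i \in B by rewrite !ie // Ee !inE eqxx ?orbT.
apply/induced_edgesP; exists (A :\ i), (B :\ i).
by rewrite !setD1_in_compress // /adjQ hammingD1_eq // Ee imsetU1 imset_set1.
Qed.

Lemma compress_edge_inj : {in induced_edges F &, injective compress_edge}.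
Proof.
have shift_notin e e' : e \in induced_edges F -> e' \in induced_edges F ->
    ~~ (e' \subset compress i F) -> e <> [set X :\ i | X in e'].
  move=> eE e'E e'C Ee; have /subsetPn[X Xe' XnC] := e'C.
  have XF : X \in F := subsetP (induced_edges_sub e'E) X Xe'.
  have [_] := notin_compress XF XnC; apply/negP/negPn.
  by apply: (subsetP (induced_edges_sub eE)); rewrite Ee; apply: imset_f.
move=> e e' eE e'E; rewrite /compress_edge.
case: ifPn => eC; case: ifPn => e'C //.
- by move/(shift_notin _ _ eE e'E e'C).
- by move/esym/(shift_notin _ _ e'E eE eC).
- move=> Ee; rewrite -(imset_setD1K (edge_notin_compress eE eC)) Ee.
  by rewrite imset_setD1K //; apply: edge_notin_compress.
Qed.

Lemma card_edges_compress :
  (#|induced_edges F| <= #|induced_edges (compress i F)|)%N.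
Proof.
rewrite -(card_in_imset compress_edge_inj); apply/subset_leq_card/subsetP.
by move=> _ /imsetP[e eE ->]; apply: compress_edge_in.
Qed.

Lemma compress_hamming_lt k : {in F &, forall A B, hamming A B < k}%N ->
  {in compress i F &, forall A B, hamming A B < k}%N.
Proof.
move=> Fk.
have mixed X Y : X :\ i \in F -> Y \in F -> Y :\ i \notin F ->
    (hamming X (Y :\ i) < k)%N.
  move=> XiF YF YiF; apply: leq_ltn_trans (Fk _ _ XiF YF).
  exact/hamming_setD1_swap/(setD1_notin_mem YF).
rewrite compressE => _ _ /imsetP[X XF ->] /imsetP[Y YF ->]; rewrite /compress_map.
case: ifPn => XiF; case: ifPn => YiF.
- exact: Fk.
- exact: mixed.
- by rewrite hammingC; apply: mixed.
- exact: leq_ltn_trans (hammingD1 _ _ _) (Fk _ _ XF YF).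
Qed.

End Compression.

Local Open Scope ring_scope.

Theorem lemma6 (R : realFieldType) (n : nat) (F : {set {set 'I_n}}) (i : 'I_n)
    (d : R) (k : nat) :
  d <= avg_degree R F ->
  (forall A B, A \in F -> B \in F -> (hamming A B < k)%N) ->
  d <= avg_degree R (compress i F) /\
  (forall A B, A \in compress i F -> B \in compress i F -> (hamming A B < k)%N).
Proof.
move=> dF Fk; split; last exact: compress_hamming_lt.
apply: le_trans dF _; rewrite /avg_degree card_compress ler_wpM2r ?invr_ge0 //.
by rewrite ler_nat leq_mul2l card_edges_compress orbT.
Qed.
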